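(* Let $N\ge3$ and let $([v_{ij}:v_{ji}])_{1\le i<j\le N}$ be common lines data such that every triple $(i,j,k)$ of distinct indices strictly satisfies the spherical triangle inequalities, and such that $L_{ijk,ijm}=0$ for all pairwise distinct indices $i,j,k,m$. Then there exist generic frames $F_1,\dots,F_N$ realizing the data, i.e. with $\iota_i(v_{ij})=\iota_j(v_{ji})$ for all $i\neq j$, and they are unique up to the diagonal action of $\mathrm O(3)$.
   Context: A frame is an ordered pair $(a,b)$ of orthonormal vectors in $\mathbb R^3$. Planes $P_1=\dots=P_N=\mathbb R^2$; a frame $F_i=(a_i,b_i)$ gives the embedding $\iota_i:P_i\to\mathbb R^3$, $\iota_i(x,y)=xa_i+yb_i$. Frames $F_1,\dots,F_N$ are generic if the planes $\iota_i(P_i)$ are pairwise distinct and the lines $\iota_i(P_i)\cap\iota_j(P_j)$, $i<j$, are pairwise distinct. $\mathrm O(3)$ is the group of all $3\times3$ orthogonal matrices, acting by $A\cdot(F_1,\dots,F_N)=(AF_1,\dots,AF_N)$, $A(a,b)=(Aa,Ab)$. Common lines data is a collection $([v_{ij}:v_{ji}])_{1\le i<j\le N}$ of elements of $\mathbb P(P_i\times P_j)$ (nonzero pairs $(v_{ij},v_{ji})\in\mathbb R^2\times\mathbb R^2$ up to nonzero scaling) with $\|v_{ij}\|^2=\|v_{ji}\|^2$; indices of a pair may be written in either order. For a triple and representatives, $\alpha_{ijk}=\cos^{-1}\frac{v_{ij}\cdot v_{ik}}{\|v_{ij}\|\|v_{ik}\|}$, $\beta_{ijk}=\cos^{-1}\frac{v_{ji}\cdot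 v_{jk}}{\|v_{ji}\|\|v_{jk}\|}$, $\gamma_{ijk}=\cos^{-1}\frac{v_{ki}\cdot v_{kj}}{\|v_{ki}\|\|v_{kj}\|}$; the triple strictly satisfies the spherical triangle inequalities if for any representatives $\beta+\gamma>\alpha$, $\alpha+\gamma>\beta$, $\alpha+\beta>\gamma$, $\alpha+\beta+\gamma<2\pi$. For pairwise distinct $i,j,k,m$ and unit-norm representatives, $L_{ijk,ijm}=\big(v_{ki}\cdot v_{kj}-(v_{ij}\cdot v_{ik})(v_{ji}\cdot v_{jk})\big)|\det[v_{ij},v_{im}]\det[v_{ji},v_{jm}]|-\sigma\big(v_{mi}\cdot v_{mj}-(v_{ij}\cdot v_{im})(v_{ji}\cdot v_{jm})\big)|\det[v_{ij},v_{ik}]\det[v_{ji},v_{jk}]|$ with $\sigma=\operatorname{sign}(\det[v_{ij},v_{ik}]\det[v_{ij},v_{im}]\det[v_{ji},v_{jk}]\det[v_{ji},v_{jm}])$, where $\det[u,w]$ is the $2\times2$ determinant with columns $u,w$. *)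

From HB Require Import structures.
From mathcomp Require Import all_boot all_order all_algebra.
From mathcomp Require Import reals trigo.
Set Implicit Arguments. Unset Strict Implicit. Unset Printing Implicit Defensive.
Import Order.TTheory GRing.Theory Num.Theory.
Local Open Scope ring_scope.

Section CommonLines.
Variable R : realType.

(* Vectors of P_i = R^2 are row vectors 'rV_2. *)
Definition dot2 (u w : 'rV[R]_2) : R := u 0 0 * w 0 0 + u 0 1 * w 0 1.
Definition norm2 (u : 'rV[R]_2) : R := Num.sqrt (dot2 u u).
Definition det2 (u w : 'rV[R]_2) : R := u 0 0 * w 0 1 - w 0 0 * u 0 1.
Definition angle2 (u w : 'rV[R]_2) : R := acos (dot2 u w / (norm2 u * norm2 w)).

(* A frame (a,b) is the 2x3 matrix with rows a, b; it is a frame iff its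
   rows are orthonormal.  iota(x,y) = x a + y b is  v *m F. *)
Definition is_frame (F : 'M[R]_(2,3)) : Prop := F *m F^T = 1%:M.
Definition iota (F : 'M[R]_(2,3)) (v : 'rV[R]_2) : 'rV[R]_3 := v *m F.

(* O(3) acting on R^3; on row vectors x |-> A x reads x |-> x *m A^T. *)
Definition is_orthogonal3 (A : 'M[R]_3) : Prop := A^T *m A = 1%:M.
Definition act (A : 'M[R]_3) (F : 'M[R]_(2,3)) : 'M[R]_(2,3) := F *m A^T.

Variable N : nat.

(* the image plane iota_i(P_i) is the row space of F i *)
Definition generic (F : 'I_N -> 'M[R]_(2,3)) : Prop :=
  (forall i j, i != j -> ~~ (F i == F j)%MS) /\
  (forall i j k l, i != j -> k != l ->
     ~ ((i = k /\ j = l) \/ (i = l /\ j = k)) ->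
     ~~ ((F i :&: F j) == (F k :&: F l))%MS).

(* Common lines data, given by representatives (v i j, v j i) of
   [v_ij : v_ji] for i <> j (v i i is irrelevant). *)
Definition common_lines_data (v : 'I_N -> 'I_N -> 'rV[R]_2) : Prop :=
  forall i j, i != j ->
    (v i j != 0 \/ v j i != 0) /\ dot2 (v i j) (v i j) = dot2 (v j i) (v j i).

Definition realizes (F : 'I_N -> 'M[R]_(2,3)) (v : 'I_N -> 'I_N -> 'rV[R]_2)
  : Prop := forall i j, i != j -> iota (F i) (v i j) = iota (F j) (v j i).

(* spherical triangle inequalities (strict) for given representatives *)
Definition strict_STI_reps (w : 'I_N -> 'I_N -> 'rV[R]_2) (i j k : 'I_N)
  : Prop :=
  let a := angle2 (w i j) (w i k) in
  let b := angle2 (w j i) (w j k) in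
  let c := angle2 (w k i) (w k j) in
  [/\ b + c > a, a + c > b, a + b > c & a + b + c < 2 * pi].

(* ... for ANY representatives: rescale each pair {i,j} by a nonzero
   scalar c i j = c j i. *)
Definition strict_STI (v : 'I_N -> 'I_N -> 'rV[R]_2) (i j k : 'I_N) : Prop :=
  forall c : 'I_N -> 'I_N -> R,
    (forall p q, c p q = c q p) -> (forall p q, c p q != 0) ->
    strict_STI_reps (fun p q => c p q *: v p q) i j k.

Definition L (v : 'I_N -> 'I_N -> 'rV[R]_2) (i j k m : 'I_N) : R :=
  let u := fun p q => (norm2 (v p q))^-1 *: v p q in
  let sigma := Num.sg (det2 (u i j) (u i k) * det2 (u i j) (u i m)
                       * det2 (u j i) (u j k) * det2 (u j i) (u j m)) in
  (dot2 (u k i) (u k j) - dot2 (u i j) (u i k) * dot2 (u j i) (u j k))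
    * `|det2 (u i j) (u i m) * det2 (u j i) (u j m)|
  - sigma * (dot2 (u m i) (u m j) - dot2 (u i j) (u i m) * dot2 (u j i) (u j m))
    * `|det2 (u i j) (u i k) * det2 (u j i) (u j k)|.

End CommonLines.

From Pilot Require Import Defs.
From HB Require Import structures.
From mathcomp Require Import all_boot all_order all_algebra.
From mathcomp Require Import reals trigo.
From mathcomp Require Import ring lra.
Set Implicit Arguments. Unset Strict Implicit. Unset Printing Implicit Defensive.
Import Order.TTheory GRing.Theory Num.Theory.
Local Open Scope ring_scope.

(* Normalize the data to unit vectors u_ij.  In any realization, the planes i, j
   and k meet in the unit vectors x_ij, x_ik, x_jk, and the spherical law of
   cosines in the triangle they span gives the cosine of the dihedral angle of
   the planes i and j as a function of u alone; the strict triangle inequalities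
   put it in (-1, 1), and L = 0 says exactly that it does not depend on k.
   Existence: place the planes 0 and 1 at this angle along their common line;
   every other plane k is then forced by its common lines with 0 and 1.  The
   common line of two such planes k and m holds automatically: the frame of m
   rebuilt from the planes 0 and k, or from 1 and k, is the given one up to the
   reflection in n_0^perp, resp. n_1^perp, and the two rebuilt frames agree up
   to the reflection in n_k^perp; since n_0, n_1, n_k are independent, the three
   reflections cannot all occur without forcing the plane m to be n_0^perp.
   Uniqueness: two realizations differ on the planes 0 and 1 by an isometry,
   which then moves every other plane correctly, each plane being forced by its
   common lines with 0 and 1. *)

(** * Vectors and frames of R^3 *)

Section Vec3.
Context {R : realType}.

Record vec3 := Vec3 { vx : R; vy : R; vz : R }.

Definition addv a b := Vec3 (vx a + vx b) (vy a + vy b) (vz a + vz b).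
Definition scalev (k : R) a := Vec3 (k * vx a) (k * vy a) (k * vz a).
Definition dotv a b := vx a * vx b + vy a * vy b + vz a * vz b.
Definition crossv a b := Vec3 (vy a * vz b - vz a * vy b)
  (vz a * vx b - vx a * vz b) (vx a * vy b - vy a * vx b).

Lemma vec3_eq a b : vx a = vx b -> vy a = vy b -> vz a = vz b -> a = b.
Proof. by case: a; case: b => /= ? ? ? ? ? ? -> -> ->. Qed.

Ltac vec3_ring := apply: vec3_eq; rewrite /addv /scalev /crossv /=; ring.
Ltac vec3_field := apply: vec3_eq; rewrite /addv /scalev /crossv /=; field.

Lemma dotvC a b : dotv a b = dotv b a.
Proof. by rewrite /dotv; ring. Qed.

Lemma dotvZl k a b : dotv (scalev k a) b = k * dotv a b.
Proof. by rewrite /dotv /scalev /=; ring. Qed.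

Lemma dotvZr k a b : dotv a (scalev k b) = k * dotv a b.
Proof. by rewrite /dotv /scalev /=; ring. Qed.

Lemma dotv_cross_cross a b c d :
  dotv (crossv a b) (crossv c d) = dotv a c * dotv b d - dotv a d * dotv b c.
Proof. by rewrite /dotv /crossv /=; ring. Qed.

Lemma dotv_crossl a b : dotv (crossv a b) a = 0.
Proof. by rewrite /dotv /crossv /=; ring. Qed.

Lemma dotv_crossr a b : dotv (crossv a b) b = 0.
Proof. by rewrite /dotv /crossv /=; ring. Qed.

Lemma dotv_cross_orth a b : dotv a (crossv b a) = 0.
Proof. by rewrite dotvC dotv_crossr. Qed.

(* Frames as pairs of vectors; [embed F] is the map iota of the paper. *)
Definition frame3 := (vec3 * vec3)%type.
Definition orthonormal (F : frame3) :=
  [/\ dotv F.1 F.1 = 1, dotv F.2 F.2 = 1 & dotv F.1 F.2 = 0].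
Definition frame_normal (F : frame3) := crossv F.1 F.2.
Definition embc (F : frame3) (x0 x1 : R) := addv (scalev x0 F.1) (scalev x1 F.2).
Definition embed (F : frame3) (w : 'rV[R]_2) := embc F (w 0 0) (w 0 1).

Lemma embed_dot F p q : orthonormal F -> dotv (embed F p) (embed F q) = dot2 p q.
Proof.
case=> h1 h2 h3.
have -> : dotv (embed F p) (embed F q) =
  p 0 0 * q 0 0 * dotv F.1 F.1 + (p 0 0 * q 0 1 + p 0 1 * q 0 0) * dotv F.1 F.2
  + p 0 1 * q 0 1 * dotv F.2 F.2 by rewrite /dotv /embed /embc /addv /scalev /=; ring.
by rewrite h1 h2 h3 /dot2; ring.
Qed.

Lemma embed_unit F p : orthonormal F -> dot2 p p = 1 -> dotv (embed F p) (embed F p) = 1.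
Proof. by move=> HF hp; rewrite embed_dot. Qed.

Lemma embed_normal F w : dotv (embed F w) (frame_normal F) = 0.
Proof. by rewrite /dotv /embed /embc /frame_normal /addv /scalev /crossv /=; ring. Qed.

Lemma normal_embed F w : dotv (frame_normal F) (embed F w) = 0.
Proof. by rewrite dotvC embed_normal. Qed.

Lemma frame_normal_unit F : orthonormal F -> dotv (frame_normal F) (frame_normal F) = 1.
Proof. by case=> h1 h2 h3; rewrite dotv_cross_cross h1 h2 h3 dotvC h3; ring. Qed.

Lemma frame_expand F w : orthonormal F ->
  w = addv (addv (scalev (dotv w F.1) F.1) (scalev (dotv w F.2) F.2))
           (scalev (dotv w (frame_normal F)) (frame_normal F)).
Proof.
move=> HF; have nn := frame_normal_unit HF; case: HF => h1 h2 h3.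
have E : scalev (dotv (frame_normal F) (frame_normal F)) w =
  addv (addv (scalev (dotv F.2 F.2 * dotv w F.1 - dotv F.1 F.2 * dotv w F.2) F.1)
             (scalev (dotv F.1 F.1 * dotv w F.2 - dotv F.1 F.2 * dotv w F.1) F.2))
       (scalev (dotv w (frame_normal F)) (frame_normal F)).
  by rewrite /dotv /frame_normal; vec3_ring.
move: E; rewrite nn h1 h2 h3 => E.
transitivity (scalev 1 w); first by apply: vec3_eq; rewrite /= mul1r.
by rewrite E; congr (addv (addv (scalev _ _) (scalev _ _)) _); ring.
Qed.

Lemma perp_frame_normal_sq F w : orthonormal F -> dotv w w = 1 ->
  dotv w F.1 = 0 -> dotv w F.2 = 0 -> dotv w (frame_normal F) ^+ 2 = 1.
Proof.
move=> HF hw h1 h2; have E := frame_expand w HF.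
rewrite h1 h2 in E; set c := dotv w (frame_normal F) in E *.
rewrite -hw E.
transitivity (c ^+ 2 * dotv (frame_normal F) (frame_normal F)).
  by rewrite frame_normal_unit // mulr1.
by rewrite /dotv /addv /scalev /=; ring.
Qed.

Lemma frame_eq_of_embed (H H' : frame3) (p q : 'rV[R]_2) : det2 p q != 0 ->
  embed H p = embed H' p -> embed H q = embed H' q -> H = H'.
Proof.
move=> hd e1 e2.
have k1 G : G.1 = scalev (det2 p q)^-1
    (addv (scalev (q 0 1) (embed G p)) (scalev (- p 0 1) (embed G q))).
  by move: hd; rewrite /embed /embc /det2 => hd; vec3_field.
have k2 G : G.2 = scalev (det2 p q)^-1
    (addv (scalev (- q 0 0) (embed G p)) (scalev (p 0 0) (embed G q))).
  by move: hd; rewrite /embed /embc /det2 => hd; vec3_field.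
case: H e1 e2 k1 k2 => a b; case: H' => a' b' e1 e2 k1 k2.
have ea := k1 (a, b); have ea' := k1 (a', b').
have eb := k2 (a, b); have eb' := k2 (a', b').
rewrite /= in ea ea' eb eb'.
by congr pair; [rewrite ea ea' e1 e2 | rewrite eb eb' e1 e2].
Qed.

Definition embed_perp (p : 'rV[R]_2) F := embc F (- p 0 1) (p 0 0).

Lemma embed_decomp F (p w : 'rV[R]_2) : dot2 p p = 1 ->
  embed F w = addv (scalev (dot2 p w) (embed F p)) (scalev (det2 p w) (embed_perp p F)).
Proof.
move=> hp; transitivity (embc F (w 0 0 * dot2 p p) (w 0 1 * dot2 p p)).
  by rewrite hp !mulr1.
by rewrite /dot2 /det2 /embed /embed_perp /embc; vec3_ring.
Qed.

Lemma embed_perpE F p : orthonormal F ->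
  embed_perp p F = crossv (frame_normal F) (embed F p).
Proof.
case=> h1 h2 h3.
have -> : crossv (frame_normal F) (embed F p) =
  embc F (- p 0 0 * dotv F.1 F.2 - p 0 1 * dotv F.2 F.2)
         (p 0 0 * dotv F.1 F.1 + p 0 1 * dotv F.1 F.2).
  by rewrite /dotv /embed /embc /frame_normal; vec3_ring.
by rewrite h1 h2 h3 /embed_perp; congr embc; ring.
Qed.

(* Decompose along the common line x and the perpendiculars n_i x x, n_j x x. *)
Lemma embed_dot_across Fi Fj (p q w w' : 'rV[R]_2) :
  orthonormal Fi -> orthonormal Fj -> dot2 p p = 1 -> dot2 q q = 1 ->
  embed Fi p = embed Fj q ->
  dotv (embed Fi w) (embed Fj w') =
  dot2 p w * dot2 q w' + det2 p w * det2 q w' * dotv (frame_normal Fi) (frame_normal Fj).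
Proof.
move=> Hi Hj hp hq hx.
rewrite (embed_decomp Fi w hp) (embed_decomp Fj w' hq) !embed_perpE // -hx.
set x := embed Fi p.
have xx : dotv x x = 1 by exact: embed_unit.
have xi : dotv (frame_normal Fi) x = 0 by exact: normal_embed.
have xj : dotv x (frame_normal Fj) = 0 by rewrite /x hx embed_normal.
set a := dot2 p w; set b := det2 p w; set c := dot2 q w'; set d := det2 q w'.
have -> : dotv (addv (scalev a x) (scalev b (crossv (frame_normal Fi) x)))
    (addv (scalev c x) (scalev d (crossv (frame_normal Fj) x))) =
  a * c * dotv x x + a * d * dotv x (crossv (frame_normal Fj) x)
  + b * c * dotv (crossv (frame_normal Fi) x) x
  + b * d * (dotv (frame_normal Fi) (frame_normal Fj) * dotv x x
             - dotv (frame_normal Fi) x * dotv x (frame_normal Fj)).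
  by rewrite /dotv /addv /scalev /crossv /=; ring.
by rewrite xx xi xj dotv_cross_orth dotv_crossr; ring.
Qed.

Lemma common_lines_cosine_law Fi Fj Fk (uij uik uji ujk uki ukj : 'rV[R]_2) :
  orthonormal Fi -> orthonormal Fj -> orthonormal Fk ->
  dot2 uij uij = 1 -> dot2 uji uji = 1 ->
  embed Fi uij = embed Fj uji -> embed Fi uik = embed Fk uki ->
  embed Fj ujk = embed Fk ukj ->
  dot2 uki ukj = dot2 uij uik * dot2 uji ujk
                 + det2 uij uik * det2 uji ujk * dotv (frame_normal Fi) (frame_normal Fj).
Proof.
move=> Hi Hj Hk h1 h2 e1 e2 e3.
by rewrite -(embed_dot uki ukj Hk) -e2 -e3 (embed_dot_across _ _ Hi Hj h1 h2 e1).
Qed.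

Definition frame_through (p q : 'rV[R]_2) (y0 y1 : vec3) : frame3 :=
  (scalev (det2 p q)^-1 (addv (scalev (q 0 1) y0) (scalev (- p 0 1) y1)),
   scalev (det2 p q)^-1 (addv (scalev (- q 0 0) y0) (scalev (p 0 0) y1))).

Lemma frame_through_embedl p q y0 y1 : det2 p q != 0 ->
  embed (frame_through p q y0 y1) p = y0.
Proof. by rewrite /frame_through /embed /embc /det2 => hd; vec3_field. Qed.

Lemma frame_through_embedr p q y0 y1 : det2 p q != 0 ->
  embed (frame_through p q y0 y1) q = y1.
Proof. by rewrite /frame_through /embed /embc /det2 => hd; vec3_field. Qed.

Lemma frame_through_orthonormal p q y0 y1 : det2 p q != 0 ->
  dotv y0 y0 = dot2 p p -> dotv y1 y1 = dot2 q q -> dotv y0 y1 = dot2 p q ->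
  orthonormal (frame_through p q y0 y1).
Proof.
move=> hd h0 h1 h01.
have e k l m n : dotv (addv (scalev k y0) (scalev l y1))
    (addv (scalev m y0) (scalev n y1)) =
    k * m * dotv y0 y0 + (k * n + l * m) * dotv y0 y1 + l * n * dotv y1 y1.
  by rewrite /dotv /addv /scalev /=; ring.
have s (c : R) A B : dotv (scalev c A) (scalev c B) = c ^+ 2 * dotv A B.
  by rewrite /dotv /scalev /=; ring.
move: hd; rewrite /frame_through /orthonormal /= !s !e h0 h1 h01 /dot2 /det2 => hd.
by split; field.
Qed.

Lemma frame_row1_decomp H (u : 'rV[R]_2) : orthonormal H -> dot2 u u = 1 ->
  H.1 = addv (scalev (u 0 0) (embed H u))
             (scalev (- u 0 1) (crossv (frame_normal H) (embed H u))).
Proof.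
move=> HH hu; rewrite -embed_perpE //.
transitivity (scalev (dot2 u u) H.1); first by rewrite hu; apply: vec3_eq; rewrite /= mul1r.
by rewrite /dot2 /embed_perp /embed /embc; vec3_ring.
Qed.

Lemma frame_row2_decomp H (u : 'rV[R]_2) : orthonormal H -> dot2 u u = 1 ->
  H.2 = addv (scalev (u 0 1) (embed H u))
             (scalev (u 0 0) (crossv (frame_normal H) (embed H u))).
Proof.
move=> HH hu; rewrite -embed_perpE //.
transitivity (scalev (dot2 u u) H.2); first by rewrite hu; apply: vec3_eq; rewrite /= mul1r.
by rewrite /dot2 /embed_perp /embed /embc; vec3_ring.
Qed.

(* The reflection in p^perp when p is a unit vector. *)
Definition reflectv (p w : vec3) := addv w (scalev (-2 * dotv p w) p).
Definition reflect_frame (p : vec3) (F : frame3) : frame3 :=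
  (reflectv p F.1, reflectv p F.2).

(* Dot with n1 x nk: reflections in n1^perp and nk^perp fix it, while the one in
   n0^perp changes it by 2 (n0.r) (n0.(n1 x nk)). *)
Lemma reflectv_comp_perp (n0 n1 nk r : vec3) : dotv n0 (crossv n1 nk) != 0 ->
  reflectv n1 r = reflectv nk (reflectv n0 r) -> dotv n0 r = 0.
Proof.
move=> hn h.
have : dotv (reflectv n1 r) (crossv n1 nk)
       - dotv (reflectv nk (reflectv n0 r)) (crossv n1 nk)
     = 2 * dotv n0 r * dotv n0 (crossv n1 nk).
  by rewrite /reflectv /dotv /addv /scalev /crossv /=; ring.
rewrite h subrr => /eqP; rewrite eq_sym !mulf_eq0 (negbTE hn) orbF.
by case/orP => /eqP // h2; move: h2; lra.
Qed.

(* The normal of H lies in x^perp, which is spanned by p and p x x. *)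
Lemma frame_in_line_basis H (u : 'rV[R]_2) p : orthonormal H -> dot2 u u = 1 ->
  dotv p p = 1 -> dotv p (embed H u) = 0 ->
  let x := embed H u in let q := crossv p x in
  let t := dotv (frame_normal H) p in let s := dotv (frame_normal H) q in
  t ^+ 2 + s ^+ 2 = 1 /\
  H = (addv (addv (scalev (u 0 0) x) (scalev (- u 0 1 * t) q)) (scalev (u 0 1 * s) p),
       addv (addv (scalev (u 0 1) x) (scalev (u 0 0 * t) q)) (scalev (- u 0 0 * s) p)).
Proof.
move=> HH hu hp hpx /=; set x := embed H u; set q := crossv p x.
have xx : dotv x x = 1 by exact: embed_unit.
have Fpx : orthonormal (p, x) by split => //; rewrite dotvC.
have qq : dotv q q = 1 by exact: (frame_normal_unit Fpx).
have pq : dotv p q = 0 by rewrite dotvC dotv_crossl.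
have qx : crossv q x = scalev (-1) p.
  have -> : crossv q x = addv (scalev (dotv p x) x) (scalev (- dotv x x) p).
    by rewrite /q /dotv; vec3_ring.
  by rewrite hpx xx; apply: vec3_eq; rewrite /=; ring.
have En : frame_normal H = addv (scalev (dotv (frame_normal H) p) p)
                                 (scalev (dotv (frame_normal H) q) q).
  rewrite {1}(frame_expand (frame_normal H) Fpx) /= normal_embed -/q.
  by apply: vec3_eq; rewrite /=; ring.
set t := dotv (frame_normal H) p in En *; set s := dotv (frame_normal H) q in En *.
have cr a b : crossv (addv (scalev a p) (scalev b q)) x
    = addv (scalev a q) (scalev b (crossv q x)).
  by rewrite /q; vec3_ring.
split.
  rewrite -(frame_normal_unit HH) [in RHS]En.
  have -> : dotv (addv (scalev t p) (scalev s q)) (addv (scalev t p) (scalev s q))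
      = t ^+ 2 * dotv p p + 2 * t * s * dotv p q + s ^+ 2 * dotv q q.
    by rewrite /dotv /addv /scalev /=; ring.
  by rewrite hp pq qq; ring.
rewrite [LHS]surjective_pairing {1}(frame_row1_decomp HH hu) (frame_row2_decomp HH hu).
by rewrite -/x En cr qx; congr pair; apply: vec3_eq; rewrite /=; ring.
Qed.

Lemma frame_eq_or_reflect H H' (u : 'rV[R]_2) p : orthonormal H -> orthonormal H' ->
  dot2 u u = 1 -> embed H u = embed H' u -> dotv p p = 1 -> dotv p (embed H u) = 0 ->
  dotv (frame_normal H) p = dotv (frame_normal H') p -> H' = H \/ H' = reflect_frame p H.
Proof.
move=> HH HH' hu ex hp hpx hn.
have [] := frame_in_line_basis HH' hu hp (etrans (congr1 (dotv p) (esym ex)) hpx).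
have [] := frame_in_line_basis HH hu hp hpx.
rewrite -ex -hn; set x := embed H u; set t := dotv (frame_normal H) p; set q := crossv p x.
set s := dotv (frame_normal H) q; set s' := dotv (frame_normal H') q.
move=> s2 -> s2' ->.
have /eqP : (s' - s) * (s' + s) = 0 by rewrite -subr_sqr; lra.
rewrite mulf_eq0 => /orP[] /eqP hs; [left | right].
  by have -> : s' = s by lra.
have -> : s' = - s by lra.
have pq : dotv p q = 0 by rewrite dotvC dotv_crossl.
have pw a b c : dotv p (addv (addv (scalev a x) (scalev b q)) (scalev c p)) = c.
  have -> : dotv p (addv (addv (scalev a x) (scalev b q)) (scalev c p)) =
     a * dotv p x + b * dotv p q + c * dotv p p by rewrite /dotv /addv /scalev /=; ring.
  by rewrite hpx pq hp; ring.
by rewrite /reflect_frame /reflectv /= !pw; congr pair; apply: vec3_eq; rewrite /=; ring.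
Qed.

Lemma embed_dot_normal_neq0 Fi Fk (uij uik uki : 'rV[R]_2) :
  orthonormal Fi -> orthonormal Fk -> det2 uij uik != 0 ->
  embed Fi uik = embed Fk uki ->
  dotv (frame_normal Fi) (frame_normal Fk) ^+ 2 < 1 ->
  dotv (embed Fi uij) (frame_normal Fk) != 0.
Proof.
move=> Hi Hk hd e hlt; apply/eqP => h0.
have h1 : dotv (embed Fi uik) (frame_normal Fk) = 0 by rewrite e embed_normal.
set g0 := dotv Fi.1 (frame_normal Fk); set g1 := dotv Fi.2 (frame_normal Fk).
have ex w : dotv (embed Fi w) (frame_normal Fk) = w 0 0 * g0 + w 0 1 * g1.
  by rewrite /g0 /g1 /embed /embc /dotv /addv /scalev /=; ring.
rewrite ex in h0; rewrite ex in h1.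
have /eqP : g0 * det2 uij uik = 0.
  have -> : g0 * det2 uij uik = uik 0 1 * (uij 0 0 * g0 + uij 0 1 * g1)
     - uij 0 1 * (uik 0 0 * g0 + uik 0 1 * g1) by rewrite /det2; ring.
  by rewrite h0 h1; ring.
rewrite mulf_eq0 (negbTE hd) orbF => /eqP z0.
have /eqP : g1 * det2 uij uik = 0.
  have -> : g1 * det2 uij uik = - uik 0 0 * (uij 0 0 * g0 + uij 0 1 * g1)
     + uij 0 0 * (uik 0 0 * g0 + uik 0 1 * g1) by rewrite /det2; ring.
  by rewrite h0 h1; ring.
rewrite mulf_eq0 (negbTE hd) orbF => /eqP z1.
have := perp_frame_normal_sq Hi (frame_normal_unit Hk).
rewrite dotvC -/g0 z0 dotvC -/g1 z1 => /(_ erefl erefl).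
by rewrite dotvC => h; move: hlt; rewrite h ltxx.
Qed.

(* n0 x n1 is a nonzero multiple of the common line x of planes 0 and 1. *)
Lemma triple_normal_neq0 F0 F1 Fk (p q : 'rV[R]_2) :
  orthonormal F0 -> orthonormal F1 -> dot2 p p = 1 -> embed F0 p = embed F1 q ->
  dotv (frame_normal F0) (frame_normal F1) ^+ 2 < 1 ->
  dotv (embed F0 p) (frame_normal Fk) != 0 ->
  dotv (frame_normal F0) (crossv (frame_normal F1) (frame_normal Fk)) != 0.
Proof.
move=> H0 H1 hp e hlt hx.
set x := embed F0 p in e hx *.
set n0 := frame_normal F0; set n1 := frame_normal F1; set nk := frame_normal Fk.
set w := crossv n0 n1.
have -> : dotv n0 (crossv n1 nk) = dotv w nk by rewrite /w /dotv /crossv /=; ring.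
have xx : dotv x x = 1 by exact: embed_unit.
set Y := crossv n0 x.
have n00 : dotv n0 n0 = 1 by exact: frame_normal_unit.
have x0 : dotv x n0 = 0 by exact: embed_normal.
have x1 : dotv x n1 = 0 by rewrite e embed_normal.
have G : orthonormal (x, Y).
  split => //=; last by rewrite /Y dotv_cross_orth.
  by rewrite /Y dotv_cross_cross n00 xx dotvC x0; ring.
have nG : frame_normal (x, Y) = n0.
  have -> : frame_normal (x, Y) = addv (scalev (dotv x x) n0) (scalev (- dotv x n0) x).
    by rewrite /frame_normal /Y /dotv /=; vec3_ring.
  by rewrite xx x0; apply: vec3_eq; rewrite /=; ring.
have wY : dotv w Y = 0.
  by rewrite /w /Y dotv_cross_cross n00 dotvC x1 dotvC x0; ring.
have w0 : dotv w n0 = 0 by rewrite /w dotv_crossl.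
have Ew := frame_expand w G; rewrite /= wY nG w0 in Ew.
have ww : dotv w w = 1 - dotv n0 n1 ^+ 2.
  by rewrite /w dotv_cross_cross n00 frame_normal_unit // dotvC; ring.
have -> : dotv w nk = dotv w x * dotv x nk by rewrite {1}Ew /dotv /addv /scalev /=; ring.
rewrite mulf_neq0 //; apply/eqP => wx.
have : dotv w w = 0 by rewrite {1}Ew wx /dotv /addv /scalev /=; ring.
by rewrite ww => /eqP; rewrite subr_eq0 => /eqP h; move: hlt; rewrite -h ltxx.
Qed.

Lemma orthonormal_line_frame F (p : 'rV[R]_2) : orthonormal F -> dot2 p p = 1 ->
  orthonormal (embed F p, crossv (frame_normal F) (embed F p)) /\
  frame_normal (embed F p, crossv (frame_normal F) (embed F p)) = frame_normal F.
Proof.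
move=> HF hp; set x := embed F p; set n0 := frame_normal F.
have xx : dotv x x = 1 by exact: embed_unit.
have n00 : dotv n0 n0 = 1 by exact: frame_normal_unit.
have x0 : dotv x n0 = 0 by exact: embed_normal.
split.
  split => //=; last by rewrite dotv_cross_orth.
  by rewrite dotv_cross_cross n00 xx dotvC x0; ring.
have -> : frame_normal (x, crossv n0 x) =
    addv (scalev (dotv x x) n0) (scalev (- dotv x n0) x).
  by rewrite /frame_normal /dotv /=; vec3_ring.
by rewrite xx x0; apply: vec3_eq; rewrite /=; ring.
Qed.

Definition coordv (w : vec3) (j : 'I_3) : R :=
  if j == 0 :> nat then vx w else if j == 1 :> nat then vy w else vz w.

Lemma orthonormal_complete F (l m : 'I_3) : orthonormal F ->
  coordv F.1 l * coordv F.1 m + coordv F.2 l * coordv F.2 m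
  + coordv (frame_normal F) l * coordv (frame_normal F) m = (l == m)%:R.
Proof.
move=> HF.
have key w := frame_expand w HF.
move: (key (Vec3 1 0 0)) (key (Vec3 0 1 0)) (key (Vec3 0 0 1)); rewrite /coordv.
move: (frame_normal F) F.1 F.2 => n a b.
case: a => a1 a2 a3; case: b => b1 b2 b3; case: n => n1 n2 n3.
rewrite /dotv /addv /scalev /= => [[e11 e12 e13] [e21 e22 e23] [e31 e32 e33]].
case: l => [[|[|[|l]]]] //= hl; case: m => [[|[|[|m]]]] //= hm.
all: rewrite ?eqxx /= ?mulr0n ?mulr1n.
all: first [ rewrite [in RHS]e11; ring | rewrite [in RHS]e12; ring
  | rewrite [in RHS]e13; ring | rewrite [in RHS]e21; ring | rewrite [in RHS]e22; ring
  | rewrite [in RHS]e23; ring | rewrite [in RHS]e31; ring | rewrite [in RHS]e32; ring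
  | rewrite [in RHS]e33; ring ].
Qed.

End Vec3.

(** * The spherical triangle inequalities *)

(* With a = cos A, b = cos B, c = cos C and |a'| = sin A, |b'| = sin B:
   strict triangle inequalities for the angles give
   cos (A + B) < c < cos (A - B), that is |c - a b| < sin A sin B. *)
Lemma spherical_triangle_cos_bound (R : realType) (a b c a' b' : R) :
  a ^+ 2 + a' ^+ 2 = 1 -> b ^+ 2 + b' ^+ 2 = 1 -> -1 <= c <= 1 ->
  acos b + acos c > acos a -> acos a + acos c > acos b ->
  acos a + acos b > acos c -> acos a + acos b + acos c < 2 * pi ->
  a' != 0 /\ (c - a * b) ^+ 2 < (a' * b') ^+ 2.
Proof.
move=> ha hb hc h1 h2 h3 h4.
have ha1 : -1 <= a <= 1 by apply/andP; split; nra.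
have hb1 : -1 <= b <= 1 by apply/andP; split; nra.
have [A0 Api] := (acos_ge0 ha1, acos_lepi ha1).
have [B0 Bpi] := (acos_ge0 hb1, acos_lepi hb1).
have [C0 Cpi] := (acos_ge0 hc, acos_lepi hc).
have ca : cos (acos a) = a by apply: acosK; rewrite in_itv.
have cb : cos (acos b) = b by apply: acosK; rewrite in_itv.
have cc : cos (acos c) = c by apply: acosK; rewrite in_itv.
have sa := sin_acos ha1; have sb := sin_acos hb1.
split.
  apply/eqP => a'0.
  have /eqP : a ^+ 2 = 1 by rewrite -ha a'0; ring.
  rewrite sqrf_eq1 => /orP[] /eqP ae.
    by move: h2 h3; rewrite ae acos1; lra.
  by move: h1 h4; rewrite ae acosN1; lra.
set S := Num.sqrt (1 - a ^+ 2) * Num.sqrt (1 - b ^+ 2).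
have S2 : S ^+ 2 = (a' * b') ^+ 2.
  have e1 : 1 - a ^+ 2 = a' ^+ 2 by lra.
  have e2 : 1 - b ^+ 2 = b' ^+ 2 by lra.
  by rewrite /S e1 e2 !sqrtr_sqr exprMn !real_normK ?num_real // exprMn.
have up : c < a * b + S.
  have : cos (acos c) < cos `|acos a - acos b|.
    rewrite ltr_cos; first by apply/ltr_normlP; split; lra.
      by rewrite in_itv /= normr_ge0 /=; apply/ler_normlP; split; lra.
    by rewrite in_itv /= C0 Cpi.
  by rewrite cos_norm cosB ca cb cc sa sb.
have lo : a * b - S < c.
  have -> : a * b - S = cos (acos a + acos b) by rewrite cosD ca cb sa sb.
  case: (lerP (acos a + acos b) pi) => hab.
    by rewrite -cc ltr_cos ?in_itv /= ?C0 ?Cpi // hab andbT addr_ge0.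
  have -> : cos (acos a + acos b) = cos (pi *+ 2 - (acos a + acos b)).
    by rewrite [pi *+ 2 - _]addrC cosD2pi cosN.
  have h5 : acos a + acos b + acos c < pi + pi by move: h4; rewrite mulrDl mul1r.
  rewrite -cc ltr_cos ?in_itv /= ?C0 ?Cpi //= ?mulr2n; lra.
rewrite -S2 -real_normK ?num_real // ltr_pXn2r ?nnegrE ?normr_ge0 ?mulr_ge0 ?sqrtr_ge0 //.
by apply/ltr_normlP; split; lra.
Qed.

(** * Frames as 2 x 3 matrices *)

Section MatrixFrames.
Context {R : realType}.

Definition rowv (M : 'M[R]_(2,3)) (r : 'I_2) : vec3 := Vec3 (M r 0) (M r 1) (M r 2).
Definition frame_of_mx (M : 'M[R]_(2,3)) : frame3 := (rowv M 0, rowv M 1).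
Definition mx_of_frame (F : @frame3 R) : 'M[R]_(2,3) :=
  \matrix_(r < 2, j < 3) coordv (if r == 0 :> nat then F.1 else F.2) j.
Definition row_of_vec (x : @vec3 R) : 'rV[R]_3 := \row_(j < 3) coordv x j.
Definition vec_of_row (x : 'rV[R]_3) : vec3 := Vec3 (x 0 0) (x 0 1) (x 0 2).

Lemma sum_ord3 (f : 'I_3 -> R) : \sum_(j < 3) f j = f 0 + f 1 + f 2.
Proof.
by rewrite !big_ord_recr big_ord0 /= add0r; congr (_ + _ + _); apply: congr1; apply: val_inj.
Qed.

Lemma sum_ord2 (f : 'I_2 -> R) : \sum_(j < 2) f j = f 0 + f 1.
Proof.
by rewrite !big_ord_recr big_ord0 /= add0r; congr (_ + _); apply: congr1; apply: val_inj.
Qed.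

Lemma ord3_cases (j : 'I_3) : j = 0 \/ j = 1 \/ j = 2.
Proof. by case: j => [[|[|[|j]]]] // hj; [left|right; left|right; right]; apply: val_inj. Qed.

Lemma ord2_cases (j : 'I_2) : j = 0 \/ j = 1.
Proof. by case: j => [[|[|j]]] // hj; [left|right]; apply: val_inj. Qed.

Lemma frame_of_mxK M : mx_of_frame (frame_of_mx M) = M.
Proof.
apply/matrixP => r j; rewrite mxE.
by case: (ord2_cases r) => ->; case: (ord3_cases j) => [->|[->|->]].
Qed.

Lemma mx_of_frameK F : frame_of_mx (mx_of_frame F) = F.
Proof. by case: F => a b; rewrite /frame_of_mx /rowv !mxE /=; case: a; case: b. Qed.

Lemma row_of_vec_inj : injective row_of_vec.
Proof.
move=> x y /rowP h; have := h 0; have := h 1; have := h 2.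
by rewrite !mxE /coordv /=; case: x {h} => ? ? ?; case: y => ? ? ? /= -> -> ->.
Qed.

Lemma row_of_vecK : cancel row_of_vec vec_of_row.
Proof. by case=> ? ? ?; rewrite /vec_of_row !mxE. Qed.

Lemma iota_embed M (w : 'rV[R]_2) : Defs.iota M w = row_of_vec (embed (frame_of_mx M) w).
Proof.
apply/rowP => j; rewrite /Defs.iota !mxE sum_ord2 /=.
by case: (ord3_cases j) => [->|[->|->]]; rewrite /coordv /=.
Qed.

Lemma is_frameE M : is_frame M <-> orthonormal (frame_of_mx M).
Proof.
have E r s : (M *m M^T) r s = dotv (rowv M r) (rowv M s).
  by rewrite !mxE sum_ord3 !mxE /dotv /=.
rewrite /is_frame /orthonormal; split.
  move/matrixP => h; have := h 0 0; have := h 1 1; have := h 0 1.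
  by rewrite !E !mxE /= => h01 h11 h00; split.
case=> h1 h2 h3; apply/matrixP => r s; rewrite E mxE.
by case: (ord2_cases r) => ->; case: (ord2_cases s) => -> //=; rewrite dotvC.
Qed.

Lemma submx_frame_normal (x : 'rV[R]_3) (M : 'M[R]_(2,3)) :
  (x <= M)%MS -> dotv (vec_of_row x) (frame_normal (frame_of_mx M)) = 0.
Proof.
case/submxP => D ->.
by rewrite /vec_of_row /frame_of_mx /rowv /frame_normal /dotv /crossv /= !mxE !sum_ord2; ring.
Qed.

Lemma submx_rows_normal (M' M : 'M[R]_(2,3)) : (M' <= M)%MS ->
  dotv (rowv M' 0) (frame_normal (frame_of_mx M)) = 0 /\
  dotv (rowv M' 1) (frame_normal (frame_of_mx M)) = 0.
Proof.
move=> h; have e r : rowv M' r = vec_of_row (row r M') by rewrite /rowv /vec_of_row !mxE.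
by rewrite !e; split; apply: submx_frame_normal; apply: submx_trans h; apply: row_sub.
Qed.

Definition basis_map (x y n x' y' n' w : @vec3 R) :=
  addv (addv (scalev (dotv w x) x') (scalev (dotv w y) y')) (scalev (dotv w n) n').
Definition map_frame (f : @vec3 R -> vec3) (F : @frame3 R) : @frame3 R := (f F.1, f F.2).
Definition basis_map_mx (x y n x' y' n' : vec3) : 'M[R]_3 :=
  \matrix_(l, m) (coordv x' l * coordv x m + coordv y' l * coordv y m
                  + coordv n' l * coordv n m).

Lemma act_basis_map_mx x y n x' y' n' F :
  act (basis_map_mx x y n x' y' n') (mx_of_frame F) =
  mx_of_frame (map_frame (basis_map x y n x' y' n') F).
Proof.
apply/matrixP => r l; rewrite /act !mxE sum_ord3 !mxE.
by case: (ord2_cases r) => ->; case: (ord3_cases l) => [->|[->|->]];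
  rewrite /coordv /basis_map /map_frame /dotv /=; ring.
Qed.

Lemma basis_map_mx_orthogonal x y x' y' n' :
  orthonormal (x, y) -> orthonormal (x', y') ->
  dotv n' n' = 1 -> dotv x' n' = 0 -> dotv y' n' = 0 ->
  is_orthogonal3 (basis_map_mx x y (frame_normal (x, y)) x' y' n').
Proof.
move=> Hxy [hxx hyy hxy] hnn hxn hyn; apply/matrixP => p q.
rewrite !mxE sum_ord3 !mxE -(orthonormal_complete p q Hxy) /=.
set n := frame_normal (x, y).
transitivity (coordv x p * coordv x q * dotv x' x' + coordv y p * coordv y q * dotv y' y'
  + coordv n p * coordv n q * dotv n' n'
  + (coordv x p * coordv y q + coordv y p * coordv x q) * dotv x' y'
  + (coordv x p * coordv n q + coordv n p * coordv x q) * dotv x' n'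
  + (coordv y p * coordv n q + coordv n p * coordv y q) * dotv y' n').
  by rewrite /dotv /coordv /=; ring.
by rewrite hxx hyy hnn hxy hxn hyn; ring.
Qed.

End MatrixFrames.

(** * Reconstruction from unit common lines *)

Section Reconstruction.
Context {R : realType} {N : nat} (u : 'I_N -> 'I_N -> 'rV[R]_2).

(* For unit common lines, the cosine of the angle between the normals of the
   planes i and j, as the spherical law of cosines of the triangle (i, j, k)
   predicts it. *)
Definition normal_cos i j k :=
  (dot2 (u k i) (u k j) - dot2 (u i j) (u i k) * dot2 (u j i) (u j k))
  / (det2 (u i j) (u i k) * det2 (u j i) (u j k)).

Hypothesis u_unit : forall {p q : 'I_N}, p != q -> dot2 (u p q) (u p q) = 1.
Hypothesis u_indep : forall {i j k : 'I_N}, i != j -> i != k -> j != k ->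
  det2 (u i j) (u i k) != 0.
Hypothesis normal_cos_lt1 : forall {i j k : 'I_N}, i != j -> i != k -> j != k ->
  normal_cos i j k ^+ 2 < 1.
Hypothesis normal_cos_indep : forall {i j k m : 'I_N}, i != j -> i != k -> i != m ->
  j != k -> j != m -> k != m -> normal_cos i j k = normal_cos i j m.

Lemma normal_dot_realized Fi Fj Fk i j k : i != j -> i != k -> j != k ->
  orthonormal Fi -> orthonormal Fj -> orthonormal Fk ->
  embed Fi (u i j) = embed Fj (u j i) -> embed Fi (u i k) = embed Fk (u k i) ->
  embed Fj (u j k) = embed Fk (u k j) ->
  dotv (frame_normal Fi) (frame_normal Fj) = normal_cos i j k.
Proof.
move=> ij ik jk Hi Hj Hk e1 e2 e3; have ji : j != i by rewrite eq_sym.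
have := common_lines_cosine_law Hi Hj Hk (u_unit ij) (u_unit ji) e1 e2 e3.
by rewrite /normal_cos => ->; field; rewrite (u_indep ij ik jk) (u_indep ji jk ik).
Qed.

(* The frame of plane c forced by the frames of planes a and b. *)
Definition third_frame a b c (Fa Fb : frame3) :=
  frame_through (u c a) (u c b) (embed Fa (u a c)) (embed Fb (u b c)).

Lemma third_frame_embedl a b c Fa Fb : c != a -> c != b -> a != b ->
  embed (third_frame a b c Fa Fb) (u c a) = embed Fa (u a c).
Proof. by move=> ca cb ab; rewrite frame_through_embedl // u_indep. Qed.

Lemma third_frame_embedr a b c Fa Fb : c != a -> c != b -> a != b ->
  embed (third_frame a b c Fa Fb) (u c b) = embed Fb (u b c).
Proof. by move=> ca cb ab; rewrite frame_through_embedr // u_indep. Qed.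

Lemma third_frame_orthonormal a b c Fa Fb : a != b -> a != c -> b != c ->
  orthonormal Fa -> orthonormal Fb -> embed Fa (u a b) = embed Fb (u b a) ->
  dotv (frame_normal Fa) (frame_normal Fb) = normal_cos a b c ->
  orthonormal (third_frame a b c Fa Fb).
Proof.
move=> ab ac bc Ha Hb eab hn.
have [ba ca cb] : [/\ b != a, c != a & c != b] by rewrite !(eq_sym c) (eq_sym b).
apply: frame_through_orthonormal; rewrite ?u_indep ?embed_unit ?u_unit //.
rewrite (embed_dot_across _ _ Ha Hb (u_unit ab) (u_unit ba) eab) hn /normal_cos.
by field; rewrite !u_indep.
Qed.

(* Both normals make with n_a the angle given by [normal_cos a m _], which does
   not depend on the third plane. *)
Lemma frames_eq_or_reflect a m c c' Fa Fc Fc' G G' :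
  a != m -> a != c -> a != c' -> m != c -> m != c' -> c != c' ->
  orthonormal Fa -> orthonormal Fc -> orthonormal Fc' -> orthonormal G ->
  orthonormal G' ->
  embed Fa (u a m) = embed G (u m a) -> embed Fa (u a c) = embed Fc (u c a) ->
  embed G (u m c) = embed Fc (u c m) ->
  embed Fa (u a m) = embed G' (u m a) -> embed Fa (u a c') = embed Fc' (u c' a) ->
  embed G' (u m c') = embed Fc' (u c' m) ->
  G' = G \/ G' = reflect_frame (frame_normal Fa) G.
Proof.
move=> am ac ac' mc mc' cc' Ha Hc Hc' HG HG' eG ec eGc eG' ec' eGc'.
have ma : m != a by rewrite eq_sym.
apply: (frame_eq_or_reflect HG HG' (u_unit ma) _ (frame_normal_unit Ha)).
- by rewrite -eG eG'.
- by rewrite -eG dotvC embed_normal.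
rewrite dotvC (normal_dot_realized am ac mc Ha HG Hc eG ec eGc).
rewrite dotvC (normal_dot_realized am ac' mc' Ha HG' Hc' eG' ec' eGc').
exact: normal_cos_indep am ac ac' mc mc' cc'.
Qed.

(* Frames of planes a and b fix the frames of all other planes k and m; the
   common line of k and m is then automatically respected.  Otherwise the frame
   of m would be the image of itself under three reflections, in the planes
   orthogonal to n_a, n_b and n_k, which are independent. *)
Lemma common_lines_closed Fa Fb Fk Fm a b k m :
  a != b -> a != k -> a != m -> b != k -> b != m -> k != m ->
  orthonormal Fa -> orthonormal Fb -> orthonormal Fk -> orthonormal Fm ->
  embed Fa (u a b) = embed Fb (u b a) ->
  embed Fa (u a k) = embed Fk (u k a) -> embed Fb (u b k) = embed Fk (u k b) ->
  embed Fa (u a m) = embed Fm (u m a) -> embed Fb (u b m) = embed Fm (u m b) ->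
  embed Fk (u k m) = embed Fm (u m k).
Proof.
move=> ab ak am bk bm km Ha Hb Hk Hm eab eak ebk eam ebm.
have [ba ka ma] : [/\ b != a, k != a & m != a] by rewrite ![_ == a]eq_sym.
have [kb mb mk] : [/\ k != b, m != b & m != k] by rewrite ![_ == b]eq_sym [m == k]eq_sym.
have tak : dotv (frame_normal Fa) (frame_normal Fk) = normal_cos a k m.
  rewrite (normal_dot_realized ak ab kb Ha Hk Hb eak eab (esym ebk)).
  exact: normal_cos_indep.
have tbk : dotv (frame_normal Fb) (frame_normal Fk) = normal_cos b k m.
  rewrite (normal_dot_realized bk ba ka Hb Hk Ha ebk (esym eab) (esym eak)).
  exact: normal_cos_indep.
set F' := third_frame a k m Fa Fk; set F'' := third_frame b k m Fb Fk.
have HF' : orthonormal F' by exact: third_frame_orthonormal.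
have HF'' : orthonormal F'' by exact: third_frame_orthonormal.
have e'a : embed F' (u m a) = embed Fa (u a m) by exact: third_frame_embedl.
have e'k : embed F' (u m k) = embed Fk (u k m) by exact: third_frame_embedr.
have e''b : embed F'' (u m b) = embed Fb (u b m) by exact: third_frame_embedl.
have e''k : embed F'' (u m k) = embed Fk (u k m) by exact: third_frame_embedr.
have [<-|E1] : F' = Fm \/ F' = reflect_frame (frame_normal Fa) Fm.
  by apply: (frames_eq_or_reflect am ab ak mb mk bk Ha Hb Hk Hm HF') => //;
    rewrite ?e'a ?e'k // esym.
  by rewrite e'k.
have [<-|E2] : F'' = Fm \/ F'' = reflect_frame (frame_normal Fb) Fm.
  by apply: (frames_eq_or_reflect bm ba bk ma mk ak Hb Ha Hk Hm HF'') => //;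
    rewrite ?e''b ?e''k // esym.
  by rewrite e''k.
have [E3|E3] : F'' = F' \/ F'' = reflect_frame (frame_normal Fk) F'.
  by apply: (frames_eq_or_reflect km ka kb ma mb ab Hk Ha Hb HF' HF'') => //;
    rewrite ?e'a ?e'k ?e''b ?e''k // esym.
  suff -> : Fm = F' by rewrite e'k.
  apply: (frame_eq_of_embed (u_indep ma mb ab)); first by rewrite e'a eam.
  by rewrite -E3 e''b ebm.
exfalso.
have nab := normal_dot_realized ab ak bk Ha Hb Hk eab eak ebk.
have tnz : dotv (frame_normal Fa) (crossv (frame_normal Fb) (frame_normal Fk)) != 0.
  apply: (triple_normal_neq0 Ha Hb (u_unit ab) eab); first by rewrite nab normal_cos_lt1.
  by apply: (embed_dot_normal_neq0 Ha Hk (u_indep ab ak bk) eak); rewrite tak normal_cos_lt1.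
have E : reflect_frame (frame_normal Fb) Fm =
         reflect_frame (frame_normal Fk) (reflect_frame (frame_normal Fa) Fm).
  by rewrite -E2 E3 E1.
have r1 := reflectv_comp_perp tnz (congr1 fst E).
have r2 := reflectv_comp_perp tnz (congr1 snd E).
have := perp_frame_normal_sq Hm (frame_normal_unit Ha) r1 r2.
rewrite (normal_dot_realized am ab mb Ha Hm Hb eam eab (esym ebm)) => h.
by have := normal_cos_lt1 am ab mb; rewrite h ltxx.
Qed.

Definition frames_realize (G : 'I_N -> frame3) :=
  (forall p, orthonormal (G p)) /\
  (forall p q, p != q -> embed (G p) (u p q) = embed (G q) (u q p)).

Hypothesis N3 : (3 <= N)%N.

Definition i0 : 'I_N := Ordinal (ltn_trans (isT : 0 < 2)%N N3).
Definition i1 : 'I_N := Ordinal (ltn_trans (isT : 1 < 2)%N N3).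
Definition i2 : 'I_N := Ordinal N3.

Lemma exists_third_index (i j : 'I_N) : exists k, (k != i) && (k != j).
Proof.
case: (eqVneq i0 i) => [ei|ni]; last case: (eqVneq i0 j) => [ej|nj].
- case: (eqVneq i1 j) => [ej|nj]; first by exists i2; rewrite -ei -ej.
  by exists i1; rewrite -ei nj andbT.
- case: (eqVneq i1 i) => [ei|ni']; first by exists i2; rewrite -ei -ej.
  by exists i1; rewrite ni' -ej.
- by exists i0; rewrite ni nj.
Qed.

Lemma frames_normal_dot_lt1 G i j : frames_realize G -> i != j ->
  dotv (frame_normal (G i)) (frame_normal (G j)) ^+ 2 < 1.
Proof.
move=> [HG RG] ij; have [k /andP[ki kj]] := exists_third_index i j.
have [ik jk] : i != k /\ j != k by rewrite ![_ == k]eq_sym.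
by rewrite (normal_dot_realized ij ik jk (HG i) (HG j) (HG k) (RG _ _ ij) (RG _ _ ik)
  (RG _ _ jk)) normal_cos_lt1.
Qed.

Lemma frames_embed_normal_neq0 G i j k : frames_realize G ->
  i != j -> i != k -> j != k -> dotv (embed (G i) (u i j)) (frame_normal (G k)) != 0.
Proof.
move=> RG ij ik jk; have [HG EG] := RG.
apply: (embed_dot_normal_neq0 (HG i) (HG k) (u_indep ij ik jk) (EG _ _ ik)).
exact: frames_normal_dot_lt1.
Qed.

Lemma frames_plane_not_perp G i j : frames_realize G -> i != j ->
  ~ (dotv (G j).1 (frame_normal (G i)) = 0 /\ dotv (G j).2 (frame_normal (G i)) = 0).
Proof.
move=> RG ij [h1 h2]; have [HG _] := RG.
have := perp_frame_normal_sq (HG j) (frame_normal_unit (HG i)).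
rewrite !(dotvC (frame_normal (G i))) => /(_ h1 h2) h.
have ji : j != i by rewrite eq_sym.
by have := frames_normal_dot_lt1 RG ji; rewrite h ltxx.
Qed.

Definition cos01 := normal_cos i0 i1 i2.
Definition frame0 : @frame3 R := (Vec3 1 0 0, Vec3 0 1 0).
Definition line0 := embed frame0 (u i0 i1).
(* Plane 1 is spanned by line0 and [tilted], which makes the angle of cosine
   cos01 with the perpendicular to line0 in plane 0. *)
Definition tilted := addv (scalev cos01 (embed_perp (u i0 i1) frame0))
                          (scalev (Num.sqrt (1 - cos01 ^+ 2)) (Vec3 0 0 1)).
Definition frame1 : frame3 :=
  (addv (scalev (u i1 i0 0 0) line0) (scalev (- u i1 i0 0 1) tilted),
   addv (scalev (u i1 i0 0 1) line0) (scalev (u i1 i0 0 0) tilted)).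
Definition constructed_frames k :=
  if k == i0 then frame0 else if k == i1 then frame1 else third_frame i0 i1 k frame0 frame1.

Lemma frame0_orthonormal : orthonormal frame0.
Proof. by split; rewrite /dotv /=; ring. Qed.

Lemma frame1_orthonormal : orthonormal frame1.
Proof.
have [n10 n01] : i1 != i0 /\ i0 != i1 by [].
have := u_unit n01; have := u_unit n10; rewrite /dot2 => hp hq.
have ll : dotv line0 line0 = 1 by exact: embed_unit frame0_orthonormal (u_unit n01).
have tt : dotv tilted tilted = 1.
  have s2 : Num.sqrt (1 - cos01 ^+ 2) ^+ 2 = 1 - cos01 ^+ 2.
    by rewrite sqr_sqrtr // subr_ge0 ltW // normal_cos_lt1.
  transitivity (cos01 ^+ 2 * (u i0 i1 0 0 * u i0 i1 0 0 + u i0 i1 0 1 * u i0 i1 0 1)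
                + Num.sqrt (1 - cos01 ^+ 2) ^+ 2); last by rewrite hq s2; ring.
  by rewrite /tilted /embed_perp /embc /dotv /addv /scalev /=; ring.
have lt : dotv line0 tilted = 0.
  by rewrite /line0 /tilted /embed /embed_perp /embc /dotv /=; ring.
have e a b c d : dotv (addv (scalev a line0) (scalev b tilted))
                      (addv (scalev c line0) (scalev d tilted))
    = a * c * dotv line0 line0 + (a * d + b * c) * dotv line0 tilted
      + b * d * dotv tilted tilted.
  by rewrite /dotv /addv /scalev /=; ring.
by split; rewrite /frame1 /= e ll tt lt; [rewrite -{3}hp | rewrite -{3}hp |]; ring.
Qed.

Lemma frame01_common : embed frame0 (u i0 i1) = embed frame1 (u i1 i0).
Proof.
have n10 : i1 != i0 by [].
have := u_unit n10; rewrite /dot2 => hp.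
transitivity (scalev (u i1 i0 0 0 * u i1 i0 0 0 + u i1 i0 0 1 * u i1 i0 0 1) line0).
  by rewrite hp; apply: vec3_eq; rewrite /= mul1r.
by rewrite /frame1 /embed /embc; apply: vec3_eq; rewrite /addv /scalev /=; ring.
Qed.

Lemma frame01_normal_dot : dotv (frame_normal frame0) (frame_normal frame1) = cos01.
Proof.
have [n10 n01] : i1 != i0 /\ i0 != i1 by [].
have := u_unit n01; have := u_unit n10; rewrite /dot2 => hp hq.
transitivity (cos01 * (u i0 i1 0 0 * u i0 i1 0 0 + u i0 i1 0 1 * u i0 i1 0 1)
   * (u i1 i0 0 0 * u i1 i0 0 0 + u i1 i0 0 1 * u i1 i0 0 1)); last by rewrite hp hq; ring.
rewrite /frame_normal /frame1 /frame0 /tilted /line0 /embed_perp /embed /embc.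
by rewrite /dotv /crossv /addv /scalev /=; ring.
Qed.

Lemma frames_realize_constructed : frames_realize constructed_frames.
Proof.
have [n01 n10] : i0 != i1 /\ i1 != i0 by [].
have cos01E k : k != i0 -> k != i1 -> cos01 = normal_cos i0 i1 k.
  move=> k0 k1; case: (eqVneq k i2) => [->|k2] //.
  by apply: normal_cos_indep => //; rewrite eq_sym.
have Hk k : k != i0 -> k != i1 -> orthonormal (third_frame i0 i1 k frame0 frame1).
  move=> k0 k1; apply: third_frame_orthonormal; rewrite 1?eq_sym //.
  - exact: frame0_orthonormal.
  - exact: frame1_orthonormal.
  - exact: frame01_common.
  by rewrite frame01_normal_dot; apply: cos01E.
have e0 k : k != i0 -> k != i1 ->
    embed frame0 (u i0 k) = embed (third_frame i0 i1 k frame0 frame1) (u k i0).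
  by move=> k0 k1; rewrite third_frame_embedl.
have e1 k : k != i0 -> k != i1 ->
    embed frame1 (u i1 k) = embed (third_frame i0 i1 k frame0 frame1) (u k i1).
  by move=> k0 k1; rewrite third_frame_embedr.
split=> [p|p q pq]; rewrite /constructed_frames.
  case: ifP => [_|/negbT p0]; first exact: frame0_orthonormal.
  by case: ifP => [_|/negbT p1]; [exact: frame1_orthonormal | exact: Hk].
case: (eqVneq p i0) => [->|p0].
  case: (eqVneq q i0) => [qe|q0]; first by move: pq; rewrite qe => /negP.
  by case: (eqVneq q i1) => [->|q1]; [exact: frame01_common | exact: e0].
case: (eqVneq p i1) => [->|p1].
  case: (eqVneq q i0) => [->|q0]; first exact: (esym frame01_common).
  case: (eqVneq q i1) => [qe|q1]; first by move: pq; rewrite qe => /negP.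
  exact: e1.
case: (eqVneq q i0) => [->|q0]; first exact: (esym (e0 _ p0 p1)).
case: (eqVneq q i1) => [->|q1]; first exact: (esym (e1 _ p0 p1)).
apply: (common_lines_closed n01 _ _ _ _ pq frame0_orthonormal frame1_orthonormal
  (Hk _ p0 p1) (Hk _ q0 q1) frame01_common); rewrite 1?eq_sym ?e0 ?e1 //.
Qed.

Definition line01 (G : 'I_N -> frame3) := embed (G i0) (u i0 i1).
Definition perp01 (G : 'I_N -> frame3) := crossv (frame_normal (G i0)) (line01 G).
(* Up to sign, the sine of the dihedral angle of the planes i0 and i1. *)
Definition sin01 (G : 'I_N -> frame3) :=
  dotv (crossv (frame_normal (G i1)) (line01 G)) (frame_normal (G i0)).

Lemma line01_frame G : frames_realize G ->
  orthonormal (line01 G, perp01 G) /\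
  frame_normal (line01 G, perp01 G) = frame_normal (G i0).
Proof. by move=> [HG _]; apply: orthonormal_line_frame (HG i0) (u_unit _). Qed.

Lemma crossv_normal1_line01 G : frames_realize G ->
  crossv (frame_normal (G i1)) (line01 G) =
    addv (scalev cos01 (perp01 G)) (scalev (sin01 G) (frame_normal (G i0)))
  /\ cos01 ^+ 2 + sin01 G ^+ 2 = 1.
Proof.
move=> RG; have [HG EG] := RG; have [n01 n02 n12] : [/\ i0 != i1, i0 != i2 & i1 != i2] by [].
have [Hl en] := line01_frame RG; have [xx yy _] := Hl.
set x := line01 G in Hl en xx yy *; set c := crossv (frame_normal (G i1)) x.
have xn1 : dotv x (frame_normal (G i1)) = 0 by rewrite /x /line01 (EG _ _ n01) embed_normal.
have xn0 : dotv x (frame_normal (G i0)) = 0 by exact: embed_normal.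
have nn := normal_dot_realized n01 n02 n12 (HG i0) (HG i1) (HG i2) (EG _ _ n01)
  (EG _ _ n02) (EG _ _ n12).
have cY : dotv c (perp01 G) = cos01 by rewrite /c dotv_cross_cross xx xn0 mulr0 subr0 mulr1 dotvC nn.
have Ec : c = addv (scalev cos01 (perp01 G)) (scalev (sin01 G) (frame_normal (G i0))).
  have E := frame_expand c Hl; rewrite /= en dotv_crossr cY -/(sin01 G) in E.
  by rewrite [LHS]E; apply: vec3_eq; rewrite /addv /scalev /=; ring.
split=> //.
have cc : dotv c c = 1.
  by rewrite dotv_cross_cross xx frame_normal_unit // (dotvC _ x) xn1; ring.
have yn : dotv (perp01 G) (frame_normal (G i0)) = 0 by rewrite dotv_crossl.
have sq a b y n : dotv (addv (scalev a y) (scalev b n)) (addv (scalev a y) (scalev b n))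
    = a ^+ 2 * dotv y y + 2 * a * b * dotv y n + b ^+ 2 * dotv n n.
  by rewrite /dotv /addv /scalev /=; ring.
by rewrite -cc [in RHS]Ec sq yy yn frame_normal_unit //; ring.
Qed.

Definition sign01 (G H : 'I_N -> @frame3 R) : R := if sin01 H == sin01 G then 1 else -1.

(* The isometry taking the frame (line, perp, normal) of plane i0 for G to the
   one for H, reversing the normal if the orientations of plane i1 disagree. *)
Definition iso01 (G H : 'I_N -> @frame3 R) :=
  basis_map (line01 G) (perp01 G) (frame_normal (G i0))
            (line01 H) (perp01 H) (scalev (sign01 G H) (frame_normal (H i0))).

Section Uniqueness.
Variables G H : 'I_N -> @frame3 R.
Hypotheses (RG : frames_realize G) (RH : frames_realize H).

Lemma sign01_sin01 : sign01 G H * sin01 G = sin01 H.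
Proof.
have [_ sG] := crossv_normal1_line01 RG; have [_ sH] := crossv_normal1_line01 RH.
rewrite /sign01; case: eqP => [->|ne]; first by rewrite mul1r.
have /eqP : (sin01 H - sin01 G) * (sin01 H + sin01 G) = 0 by rewrite -subr_sqr; lra.
by rewrite mulf_eq0 => /orP[] /eqP h; [case: ne; lra | lra].
Qed.

Lemma iso01D v w : iso01 G H (addv v w) = addv (iso01 G H v) (iso01 G H w).
Proof. by rewrite /iso01 /basis_map /dotv; apply: vec3_eq; rewrite /addv /scalev /=; ring. Qed.

Lemma iso01Z a v : iso01 G H (scalev a v) = scalev a (iso01 G H v).
Proof. by rewrite /iso01 /basis_map /dotv; apply: vec3_eq; rewrite /addv /scalev /=; ring. Qed.

Lemma embed_map_iso01 F w : embed (map_frame (iso01 G H) F) w = iso01 G H (embed F w).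
Proof. by rewrite /embed /embc iso01D !iso01Z. Qed.

Lemma iso01_line : iso01 G H (line01 G) = line01 H.
Proof.
have [[h1 _ h3] _] := line01_frame RG; rewrite /= in h1 h3.
rewrite /iso01 /basis_map h1 h3 embed_normal.
by apply: vec3_eq; rewrite /addv /scalev /=; ring.
Qed.

Lemma iso01_perp : iso01 G H (perp01 G) = perp01 H.
Proof.
have [[_ h2 h3] _] := line01_frame RG; rewrite /= in h2 h3.
rewrite /iso01 /basis_map h2 dotvC h3 dotv_crossl.
by apply: vec3_eq; rewrite /addv /scalev /=; ring.
Qed.

Lemma iso01_normal :
  iso01 G H (frame_normal (G i0)) = scalev (sign01 G H) (frame_normal (H i0)).
Proof.
have n1 : dotv (frame_normal (G i0)) (line01 G) = 0 by exact: normal_embed.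
have n2 : dotv (frame_normal (G i0)) (perp01 G) = 0 by rewrite dotvC dotv_crossl.
rewrite /iso01 /basis_map n1 n2 frame_normal_unit; last by case: RG.
by apply: vec3_eq; rewrite /addv /scalev /=; ring.
Qed.

Lemma iso01_embed0 w : iso01 G H (embed (G i0) w) = embed (H i0) w.
Proof.
have [[HG _] [HH _]] := (RG, RH); have n01 : i0 != i1 by [].
rewrite (embed_decomp (G i0) w (u_unit n01)) (embed_decomp (H i0) w (u_unit n01)).
rewrite !embed_perpE // -/(line01 G) -/(line01 H) -/(perp01 G) -/(perp01 H).
by rewrite iso01D !iso01Z iso01_line iso01_perp.
Qed.

Lemma iso01_embed1 w : iso01 G H (embed (G i1) w) = embed (H i1) w.
Proof.
have [[HG EG] [HH EH]] := (RG, RH); have n10 : i1 != i0 by [].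
have eG : embed (G i1) (u i1 i0) = line01 G by rewrite /line01 EG.
have eH : embed (H i1) (u i1 i0) = line01 H by rewrite /line01 EH.
rewrite (embed_decomp (G i1) w (u_unit n10)) (embed_decomp (H i1) w (u_unit n10)).
rewrite !embed_perpE // eG eH.
have [-> _] := crossv_normal1_line01 RG; have [-> _] := crossv_normal1_line01 RH.
rewrite iso01D !iso01Z iso01_line iso01D !iso01Z iso01_perp iso01_normal -sign01_sin01.
by apply: vec3_eq; rewrite /addv /scalev /=; ring.
Qed.

Lemma iso01_frames p : H p = map_frame (iso01 G H) (G p).
Proof.
have [[_ EG] [_ EH]] := (RG, RH).
have [n01 n02 n12] : [/\ i0 != i1, i0 != i2 & i1 != i2] by [].
case: (eqVneq p i0) => [->|p0].
  by apply: (frame_eq_of_embed (u_indep n01 n02 n12)); rewrite embed_map_iso01 iso01_embed0.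
case: (eqVneq p i1) => [->|p1].
  have n10 : i1 != i0 by [].
  by apply: (frame_eq_of_embed (u_indep n10 n12 n02)); rewrite embed_map_iso01 iso01_embed1.
apply: (frame_eq_of_embed (u_indep p0 p1 n01)); rewrite embed_map_iso01.
  by rewrite -EG 1?eq_sym // iso01_embed0 EH // eq_sym.
by rewrite -EG 1?eq_sym // iso01_embed1 EH // eq_sym.
Qed.

End Uniqueness.

Lemma frames_realize_unique G H : frames_realize G -> frames_realize H ->
  exists A, is_orthogonal3 A /\
            forall p, mx_of_frame (H p) = act A (mx_of_frame (G p)).
Proof.
move=> RG RH; exists (basis_map_mx (line01 G) (perp01 G) (frame_normal (G i0))
  (line01 H) (perp01 H) (scalev (sign01 G H) (frame_normal (H i0)))).
split; last by move=> p; rewrite act_basis_map_mx -iso01_frames.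
have [HlG <-] := line01_frame RG; have [HlH nH] := line01_frame RH.
have nn := frame_normal_unit HlH; rewrite nH in nn.
have e2 : sign01 G H ^+ 2 = 1 by rewrite /sign01; case: ifP => _; ring.
apply: basis_map_mx_orthogonal => //.
- by rewrite dotvZl dotvZr nn mulr1 -expr2 e2.
- by rewrite dotvZr -nH dotvC dotv_crossl mulr0.
by rewrite dotvZr -nH dotvC dotv_crossr mulr0.
Qed.

Lemma realizes_frames_realize (F : 'I_N -> 'M[R]_(2,3)) :
  (forall i, is_frame (F i)) -> realizes F u -> frames_realize (fun p => frame_of_mx (F p)).
Proof.
move=> HF rF; split=> [p|p q pq]; first exact/is_frameE.
by apply: row_of_vec_inj; rewrite -!iota_embed rF.
Qed.

Lemma frames_realize_realizes G : frames_realize G ->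
  realizes (fun p => mx_of_frame (G p)) u.
Proof. by move=> [_ EG] p q pq; rewrite !iota_embed !mx_of_frameK EG. Qed.

Lemma frames_realize_generic G : frames_realize G -> generic (fun p => mx_of_frame (G p)).
Proof.
move=> RG; split=> [i j ij | i j k l ij kl hne]; apply/negP.
  move=> /andP[_ /submx_rows_normal]; rewrite mx_of_frameK.
  have -> : rowv (mx_of_frame (G j)) 0 = (G j).1 by rewrite -{2}(mx_of_frameK (G j)).
  have -> : rowv (mx_of_frame (G j)) 1 = (G j).2 by rewrite -{2}(mx_of_frameK (G j)).
  exact: frames_plane_not_perp RG ij.
move=> /andP[s _].
set x := Defs.iota (mx_of_frame (G i)) (u i j).
have ex : vec_of_row x = embed (G i) (u i j) by rewrite /x iota_embed mx_of_frameK row_of_vecK.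
have xi : (x <= mx_of_frame (G i))%MS by exact: submxMl.
have xj : (x <= mx_of_frame (G j))%MS by rewrite /x (frames_realize_realizes RG ij) submxMl.
have xc : (x <= mx_of_frame (G i) :&: mx_of_frame (G j))%MS by rewrite sub_capmx xi xj.
have xkl := submx_trans xc s.
have on_ij m : (x <= mx_of_frame (G m))%MS -> (m == i) || (m == j).
  move=> /submx_frame_normal; rewrite mx_of_frameK ex => /eqP.
  apply: contraLR; rewrite negb_or => /andP[mi mj].
  by apply: frames_embed_normal_neq0; rewrite // eq_sym.
case/orP: (on_ij k (submx_trans xkl (capmxSl _ _))) => /eqP ek;
case/orP: (on_ij l (submx_trans xkl (capmxSr _ _))) => /eqP el;
move: kl hne; rewrite ek el;
first [by rewrite eqxx | by move=> _; apply; left | by move=> _; apply; right].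
Qed.

Lemma common_lines_unit_existence :
  exists F, (forall i, is_frame (F i)) /\ generic F /\ realizes F u.
Proof.
have RC := frames_realize_constructed.
exists (fun p => mx_of_frame (constructed_frames p)); split; last split.
- by move=> p; apply/is_frameE; rewrite mx_of_frameK; apply: RC.1.
- exact: frames_realize_generic RC.
exact: frames_realize_realizes RC.
Qed.

Lemma common_lines_unit_uniqueness (F G : 'I_N -> 'M[R]_(2,3)) :
  (forall i, is_frame (F i)) -> realizes F u ->
  (forall i, is_frame (G i)) -> realizes G u ->
  exists A, is_orthogonal3 A /\ forall i, G i = act A (F i).
Proof.
move=> HF rF HG rG.
have [A [oA EA]] := frames_realize_unique (realizes_frames_realize HF rF)
  (realizes_frames_realize HG rG).
by exists A; split=> // i; have := EA i; rewrite !frame_of_mxK.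
Qed.

End Reconstruction.

(** * Unit representatives of the data *)

Section UnitRepresentatives.
Context {R : realType} {N : nat} (v : 'I_N -> 'I_N -> 'rV[R]_2).

Lemma dot2Z (k l : R) w w' : dot2 (k *: w) (l *: w') = k * l * dot2 w w'.
Proof. by rewrite /dot2 !mxE; ring. Qed.

Lemma dot2_ge0 (w : 'rV[R]_2) : 0 <= dot2 w w.
Proof. by rewrite /dot2; nra. Qed.

Lemma dot2_eq0 (w : 'rV[R]_2) : dot2 w w = 0 -> w = 0.
Proof.
rewrite /dot2 => h.
have h0 : w 0 0 = 0 by apply/eqP; rewrite -sqrf_eq0; apply/eqP; nra.
have h1 : w 0 1 = 0 by apply/eqP; rewrite -sqrf_eq0; apply/eqP; nra.
by apply/rowP => j; rewrite mxE; case: (ord2_cases j) => ->.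
Qed.

Lemma dot2_det2_sq (a b : 'rV[R]_2) : dot2 a a = 1 -> dot2 b b = 1 ->
  dot2 a b ^+ 2 + det2 a b ^+ 2 = 1.
Proof. by move=> ha hb; rewrite -[1]mul1r -{1}ha -hb /dot2 /det2; ring. Qed.

Hypothesis v_data : common_lines_data v.

Definition unit_rep p q := (norm2 (v p q))^-1 *: v p q.

Lemma data_neq0 p q : p != q -> v p q != 0.
Proof.
move=> pq; have [[h|h] e] := v_data pq; first done.
apply/eqP => h0; apply: (negP h); apply/eqP; apply: dot2_eq0.
by rewrite -e h0 /dot2 !mxE; ring.
Qed.

Lemma norm2_data_gt0 p q : p != q -> 0 < norm2 (v p q).
Proof.
move=> pq; rewrite /norm2 sqrtr_gt0 lt_def dot2_ge0 andbT; apply/eqP => /dot2_eq0 h.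
by move: (data_neq0 pq); rewrite h eqxx.
Qed.

Lemma norm2_data_sym p q : p != q -> norm2 (v p q) = norm2 (v q p).
Proof. by move=> pq; rewrite /norm2 (v_data pq).2. Qed.

Lemma unit_repE p q : p != q -> v p q = norm2 (v p q) *: unit_rep p q.
Proof.
by move=> pq; rewrite /unit_rep scalerA mulfV ?scale1r // lt0r_neq0 ?norm2_data_gt0.
Qed.

Lemma unit_rep_unit p q : p != q -> dot2 (unit_rep p q) (unit_rep p q) = 1.
Proof.
move=> pq; rewrite /unit_rep dot2Z; have n0 := norm2_data_gt0 pq.
rewrite -[dot2 (v p q) _]sqr_sqrtr ?dot2_ge0 // -/(norm2 _).
by field; exact: lt0r_neq0.
Qed.

Lemma angle2_unit_rep p q r : p != q -> p != r ->
  angle2 (v p q) (v p r) = acos (dot2 (unit_rep p q) (unit_rep p r)).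
Proof.
move=> pq pr; rewrite /angle2 /unit_rep dot2Z; congr acos.
by field; rewrite !lt0r_neq0 ?norm2_data_gt0.
Qed.

Hypothesis v_sti : forall i j k : 'I_N, i != j -> i != k -> j != k -> strict_STI v i j k.

Lemma unit_rep_sti i j k : i != j -> i != k -> j != k ->
  det2 (unit_rep i j) (unit_rep i k) != 0 /\
  (dot2 (unit_rep k i) (unit_rep k j)
     - dot2 (unit_rep i j) (unit_rep i k) * dot2 (unit_rep j i) (unit_rep j k)) ^+ 2 <
  (det2 (unit_rep i j) (unit_rep i k) * det2 (unit_rep j i) (unit_rep j k)) ^+ 2.
Proof.
move=> ij ik jk.
have [ji ki kj] : [/\ j != i, k != i & k != j] by rewrite ![k == _]eq_sym eq_sym.
have := v_sti ij ik jk (fun _ _ => erefl 1) (fun _ _ => oner_neq0 _).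
rewrite /strict_STI_reps /= !scale1r (angle2_unit_rep ij ik) (angle2_unit_rep ji jk).
rewrite (angle2_unit_rep ki kj) => -[h1 h2 h3 h4].
apply: (spherical_triangle_cos_bound _ _ _ h1 h2 h3 h4).
- exact: dot2_det2_sq (unit_rep_unit ij) (unit_rep_unit ik).
- exact: dot2_det2_sq (unit_rep_unit ji) (unit_rep_unit jk).
have := dot2_det2_sq (unit_rep_unit ki) (unit_rep_unit kj).
by move=> hc; apply/andP; split; nra.
Qed.

Lemma unit_rep_indep i j k : i != j -> i != k -> j != k ->
  det2 (unit_rep i j) (unit_rep i k) != 0.
Proof. by move=> ij ik jk; have [] := unit_rep_sti ij ik jk. Qed.

Lemma normal_cos_unit_rep_lt1 i j k : i != j -> i != k -> j != k ->
  normal_cos unit_rep i j k ^+ 2 < 1.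
Proof.
move=> ij ik jk; have ji : j != i by rewrite eq_sym.
have [d1 hlt] := unit_rep_sti ij ik jk; have d2 := unit_rep_indep ji jk ik.
have P2 : 0 < (det2 (unit_rep i j) (unit_rep i k) * det2 (unit_rep j i) (unit_rep j k)) ^+ 2.
  by rewrite lt0r sqr_ge0 andbT sqrf_eq0 mulf_neq0.
by rewrite /normal_cos expr_div_n ltr_pdivrMr // mul1r.
Qed.

Hypothesis v_L : forall i j k m : 'I_N, i != j -> i != k -> i != m ->
  j != k -> j != m -> k != m -> L v i j k m = 0.

(* L_{ijk,ijm} = sg(Q) P Q (t_k - t_m), where t_k = (c_k - a_k b_k) / P and
   t_m = (c_m - a_m b_m) / Q are [normal_cos unit_rep i j k] and [... m]. *)
Lemma normal_cos_unit_rep_indep i j k m : i != j -> i != k -> i != m ->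
  j != k -> j != m -> k != m -> normal_cos unit_rep i j k = normal_cos unit_rep i j m.
Proof.
move=> ij ik im jk jm km; have ji : j != i by rewrite eq_sym.
have := v_L ij ik im jk jm km; rewrite /L -/unit_rep.
set ak := dot2 (unit_rep i j) (unit_rep i k); set a'k := det2 (unit_rep i j) (unit_rep i k).
set bk := dot2 (unit_rep j i) (unit_rep j k); set b'k := det2 (unit_rep j i) (unit_rep j k).
set am := dot2 (unit_rep i j) (unit_rep i m); set a'm := det2 (unit_rep i j) (unit_rep i m).
set bm := dot2 (unit_rep j i) (unit_rep j m); set b'm := det2 (unit_rep j i) (unit_rep j m).
set ck := dot2 (unit_rep k i) (unit_rep k j); set cm := dot2 (unit_rep m i) (unit_rep m j).
have P0 : a'k * b'k != 0 by rewrite mulf_neq0 // unit_rep_indep.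
have Q0 : a'm * b'm != 0 by rewrite mulf_neq0 // unit_rep_indep.
have -> : a'k * a'm * b'k * b'm = (a'k * b'k) * (a'm * b'm) by ring.
rewrite sgrM !normrEsg; set P := a'k * b'k; set Q := a'm * b'm => h.
have sP : Num.sg P ^+ 2 = 1 by rewrite sqr_sg P0.
have /eqP : Num.sg Q * ((ck - ak * bk) * Q - (cm - am * bm) * P) = 0.
  rewrite -h; transitivity (Num.sg Q * ((ck - ak * bk) * Q)
                            - Num.sg P ^+ 2 * Num.sg Q * (cm - am * bm) * P).
    by rewrite sP; ring.
  by ring.
rewrite mulf_eq0 sgr_eq0 (negbTE Q0) /= subr_eq0 => /eqP h2.
rewrite /normal_cos -/ak -/a'k -/bk -/b'k -/am -/a'm -/bm -/b'm -/ck -/cm -/P -/Q.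
by apply/eqP; rewrite eqr_div //; apply/eqP; rewrite h2; ring.
Qed.

Lemma realizes_unit_rep F : realizes F v <-> realizes F unit_rep.
Proof.
have e M p q : p != q -> Defs.iota M (v p q) = norm2 (v p q) *: Defs.iota M (unit_rep p q).
  by move=> pq; rewrite {1}(unit_repE pq) /Defs.iota scalemxAl.
split=> rF p q pq; have qp : q != p by rewrite eq_sym.
  have := rF p q pq; rewrite !e // (norm2_data_sym pq).
  exact/scalerI/lt0r_neq0/norm2_data_gt0.
by rewrite !e // (norm2_data_sym pq) (rF p q pq).
Qed.

End UnitRepresentatives.

Theorem theorem1 (R : realType) (N : nat) (v : 'I_N -> 'I_N -> 'rV[R]_2) :
  (3 <= N)%N ->
  common_lines_data v ->
  (forall i j k : 'I_N, i != j -> i != k -> j != k -> strict_STI v i j k) ->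
  (forall i j k m : 'I_N, i != j -> i != k -> i != m -> j != k -> j != m ->
     k != m -> L v i j k m = 0) ->
  (exists F : 'I_N -> 'M[R]_(2,3),
      (forall i, is_frame (F i)) /\ generic F /\ realizes F v) /\
  (forall F G : 'I_N -> 'M[R]_(2,3),
      (forall i, is_frame (F i)) -> generic F -> realizes F v ->
      (forall i, is_frame (G i)) -> generic G -> realizes G v ->
      exists A : 'M[R]_3, is_orthogonal3 A /\ forall i, G i = act A (F i)).
Proof.
move=> N3 v_data v_sti v_L.
have u_unit := unit_rep_unit v_data.
have u_indep := unit_rep_indep v_data v_sti.
split.
  have [F [HF [gF rF]]] := common_lines_unit_existence u_unit u_indep
    (normal_cos_unit_rep_lt1 v_data v_sti) (normal_cos_unit_rep_indep v_data v_sti v_L) N3.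
  by exists F; rewrite realizes_unit_rep.
move=> F G HF _ rF HG _ rG.
by apply: (common_lines_unit_uniqueness u_unit u_indep N3 HF _ HG); rewrite -realizes_unit_rep.
Qed.
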